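(* If there exist complex unit vectors $|\psi\rangle$ and $|v_j\rangle$ ($j\in V$) in $\mathbb{C}^d$ with $\langle v_i|v_j\rangle=0$ whenever $(i,j)\in E$ that attain $\sum_{j\in V} w_j |\langle \psi|v_j\rangle|^2=\vartheta_c(G)$ (a Lovász-optimum orthogonal representation realized in the $d$-dimensional complex Hilbert space), then there exist real unit vectors $|\phi\rangle$ and $|\omega_j\rangle$ ($j\in V$) in $\mathbb{R}^{2d-1}$ with $\langle \omega_i|\omega_j\rangle=0$ whenever $(i,j)\in E$ and $\sum_{j\in V} w_j (\langle \phi|\omega_j\rangle)^2=\vartheta_c(G)$. Consequently $\vartheta_c(G)=\vartheta(G)$, and the Lovász-optimum orthogonal representation of any exclusivity graph can be realized in a real Hilbert space of suitable dimension.
   Context: Let $G=(V,E,W)$ be a (weighted) exclusivity graph with vertex set $V$, edge set $E$ and nonnegative vertex weights $w_j$. The Lovász number is $\vartheta(G)=\max \sum_{j\in V} w_j (\langle \psi|v_j\rangle)^2$, where $|\psi\rangle$ and $|v_j\rangle$, $j\in V$, run over all real unit vectors (of any dimension) such that $\langle v_i|v_j\rangle=0$ whenever vertices $i,j$ are connected. Its complex generalization is $\vartheta_c(G)=\max \sum_{j\in V} w_j |\langle \psi|v_j\rangle|^2$, where $|\psi\rangle$ and $|v_j\rangle$ run over all complex unit vectors such that $\langle v_i|v_j\rangle=0$ whenever vertices $i,j$ are connected. A Lovász-optimum orthogonal representation is a choice of such vectors attaining the maximum. *)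

From HB Require Import structures.
From mathcomp Require Import all_boot all_order all_algebra.
Set Implicit Arguments. Unset Strict Implicit. Unset Printing Implicit Defensive.
Import Order.TTheory GRing.Theory Num.Theory.
Local Open Scope ring_scope.

Section Lovasz.
Variable C : numClosedFieldType.

Definition dotc (d : nat) (u v : 'cV[C]_d) : C :=
  \sum_(k < d) (u k 0)^* * v k 0.

Definition unitv (d : nat) (u : 'cV[C]_d) : Prop := dotc u u = 1.

(* a vector all of whose coordinates are real, i.e. an element of R^d *)
Definition realv (d : nat) (u : 'cV[C]_d) : Prop :=
  forall k, u k 0 \is Num.real.

Variable V : finType.

Definition orth_rep (E : rel V) (d : nat) (psi : 'cV[C]_d)
  (v : V -> 'cV[C]_d) : Prop :=
  [/\ unitv psi, forall j, unitv (v j)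
    & forall i j, E i j -> dotc (v i) (v j) = 0].

Definition real_orth_rep (E : rel V) (d : nat) (psi : 'cV[C]_d)
  (v : V -> 'cV[C]_d) : Prop :=
  [/\ orth_rep E psi v, realv psi & forall j, realv (v j)].

Definition lov_value (w : V -> C) (d : nat) (psi : 'cV[C]_d)
  (v : V -> 'cV[C]_d) : C :=
  \sum_j w j * `|dotc psi (v j)| ^+ 2.

Definition achievable_c (E : rel V) (w : V -> C) (t : C) : Prop :=
  exists d (psi : 'cV[C]_d) (v : V -> 'cV[C]_d),
    orth_rep E psi v /\ lov_value w psi v = t.

Definition achievable_r (E : rel V) (w : V -> C) (t : C) : Prop :=
  exists d (psi : 'cV[C]_d) (v : V -> 'cV[C]_d),
    real_orth_rep E psi v /\ lov_value w psi v = t.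

Definition is_theta_c (E : rel V) (w : V -> C) (t : C) : Prop :=
  achievable_c E w t /\ forall s, achievable_c E w s -> s <= t.

Definition is_theta (E : rel V) (w : V -> C) (t : C) : Prop :=
  achievable_r E w t /\ forall s, achievable_r E w s -> s <= t.

End Lovasz.

(* Rotate every v_j by a phase so that all overlaps <psi|v_j> become real and
   nonnegative; this keeps the objective and all orthogonality relations.  Now
   identify C^d with R^(2d) via (Re, Im): the real inner product is the real
   part of the Hermitian one, so unit vectors stay unit and orthogonal ones
   stay orthogonal.  Moreover psi and every v_j are real-orthogonal to i psi,
   since Re <i psi|u> = Im <psi|u>.  A Householder reflection sending i psi to
   the last basis vector then maps all of them into the first 2d - 1
   coordinates, which yields a real representation in R^(2d-1) with the same
   overlaps. *)

From HB Require Import structures.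
From mathcomp Require Import all_boot all_order all_algebra ring.
Import Order.TTheory GRing.Theory Num.Theory.
Set Implicit Arguments. Unset Strict Implicit.
Local Open Scope ring_scope.

Section RealRealization.
Variable C : numClosedFieldType.
Implicit Types (x y b : nat -> C) (n : nat).

(* Vectors of R^n are modelled as sequences nat -> C whose first n entries
   are used, which makes truncation to R^(n-1) free of dependent types. *)
Definition dotn n x y : C := \sum_(k < n) x k * y k.

Definition real_seq x := forall k, x k \is Num.real.

Definition basis_seq n : nat -> C := fun k => (k == n)%:R.

Lemma dotnC n x y : dotn n x y = dotn n y x.
Proof. by apply: eq_bigr => k _; rewrite mulrC. Qed.

Lemma dotn_basis_last n x : dotn n.+1 (basis_seq n) x = x n.
Proof.
rewrite /dotn /basis_seq big_ord_recr /= eqxx mul1r big1 ?add0r // => i _.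
by rewrite ltn_eqF ?mul0r.
Qed.

Lemma dotn_recr0 n x y : x n = 0 -> dotn n.+1 x y = dotn n x y.
Proof. by move=> xn0; rewrite /dotn big_ord_recr /= xn0 mul0r addr0. Qed.

Lemma dotn_subl n x y z : dotn n (fun k => x k - y k) z = dotn n x z - dotn n y z.
Proof. by rewrite /dotn -sumrB; apply: eq_bigr => k _; rewrite mulrBl. Qed.

Lemma dotn_axpy n x y b (s t : C) :
  dotn n (fun k => x k - s * b k) (fun k => y k - t * b k) =
  dotn n x y - t * dotn n x b - s * dotn n b y + s * t * dotn n b b.
Proof.
rewrite /dotn !mulr_sumr -!sumrB -big_split /=; apply: eq_bigr => k _; ring.
Qed.

Lemma real_dotn_self_eq0 n b :
  real_seq b -> dotn n b b = 0 -> forall i : 'I_n, b i = 0.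
Proof.
move=> rb /eqP; rewrite psumr_eq0 => [/allP bb0 i|i _].
  by apply/eqP; rewrite -sqrf_eq0 expr2; apply: bb0; rewrite mem_index_enum.
by rewrite -expr2 -real_normK ?exprn_ge0.
Qed.

(* The reflection along b; it is the identity when b is isotropic, which for
   a real b means b = 0. *)
Definition householder n b x : nat -> C :=
  if dotn n b b == 0 then x
  else fun k => x k - (2 / dotn n b b * dotn n b x) * b k.

Lemma householder_real n b x :
  real_seq b -> real_seq x -> real_seq (householder n b x).
Proof.
move=> rb rx; rewrite /householder; case: ifP => // _ k.
by rewrite rpredB ?rpredM ?rpredV ?rpred_nat ?rpred_sum // => i _; rewrite rpredM.
Qed.

Lemma householder_dot n b x y :
  dotn n (householder n b x) (householder n b y) = dotn n x y.
Proof.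
rewrite /householder; case: ifP => // /negbT bb_neq0.
rewrite dotn_axpy (dotnC _ x b).
move: bb_neq0; set bb := dotn n b b; set p := dotn n b x; set q := dotn n b y.
by move=> bb_neq0; field.
Qed.

Definition reflect_to_last n a := householder n.+1 (fun k => a k - basis_seq n k).

Lemma reflect_to_last_real n a x :
  real_seq a -> real_seq x -> real_seq (reflect_to_last n a x).
Proof. by move=> ra; apply: householder_real => k; rewrite rpredB ?rpred_nat. Qed.

Lemma reflect_to_last_lastE n a x :
  real_seq a -> dotn n.+1 a a = 1 -> dotn n.+1 a x = 0 ->
  reflect_to_last n a x n = 0.
Proof.
move=> ra aa1 ax0; rewrite /reflect_to_last /householder.
set b := fun k => _; case: ifP => [/eqP bb0 | /negbT bb_neq0].
  have b0 := @real_dotn_self_eq0 n.+1 b (fun k => rpredB (ra k) (rpred_nat _ _)) bb0.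
  rewrite -dotn_basis_last -ax0; apply: eq_bigr => k _; congr (_ * _).
  by apply/esym/eqP; rewrite -subr_eq0 -[_ - _]/(b k) b0.
have bb : dotn n.+1 b b = 2 - 2 * a n.
  rewrite /b dotn_subl !(dotnC _ _ (fun k => _ - _)) !dotn_subl aa1.
  rewrite (dotnC _ a (basis_seq n)) !dotn_basis_last /basis_seq eqxx /=; ring.
have bx : dotn n.+1 b x = - x n by rewrite /b dotn_subl ax0 dotn_basis_last sub0r.
by rewrite bb bx /basis_seq eqxx /=; rewrite bb in bb_neq0; field.
Qed.

Definition cv_seq {d} (u : 'cV[C]_d) (k : nat) : C :=
  oapp (fun i : 'I_d => u i 0) 0 (insub k).

Lemma cv_seqE d (u : 'cV[C]_d) (i : 'I_d) : cv_seq u i = u i 0.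
Proof. by rewrite /cv_seq valK. Qed.

Definition realify {d} (u : 'cV[C]_d) (k : nat) : C :=
  if (k < d)%N then 'Re (cv_seq u k) else 'Im (cv_seq u (k - d)).

Lemma realify_real d (u : 'cV[C]_d) : real_seq (realify u).
Proof. by move=> k; rewrite /realify; case: ifP => _; rewrite ?Creal_Re ?Creal_Im. Qed.

Lemma realify_dot d (u v : 'cV[C]_d) :
  dotn (d + d) (realify u) (realify v) = 'Re (dotc u v).
Proof.
rewrite /dotn big_split_ord /= /dotc raddf_sum -big_split /=.
apply: eq_bigr => i _; rewrite /realify /= ltn_ord ltnNge leq_addr /= addKn !cv_seqE.
by rewrite ReM Re_conj Im_conj; ring.
Qed.

Lemma dotcZl d (u v : 'cV[C]_d) c : dotc (c *: u) v = c^* * dotc u v.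
Proof.
by rewrite /dotc mulr_sumr; apply: eq_bigr => k _; rewrite !mxE rmorphM mulrA.
Qed.

Lemma dotcZr d (u v : 'cV[C]_d) c : dotc u (c *: v) = c * dotc u v.
Proof. by rewrite /dotc mulr_sumr; apply: eq_bigr => k _; rewrite !mxE mulrCA. Qed.

Lemma dotc_col_real n x y :
  real_seq x -> dotc (\col_(k < n) x k) (\col_(k < n) y k) = dotn n x y.
Proof. by move=> rx; apply: eq_bigr => k _; rewrite !mxE conj_Creal. Qed.

Lemma unitv_dim_gt0 d (u : 'cV[C]_d) : unitv u -> (0 < d)%N.
Proof.
by case: d u => // u; rewrite /unitv /dotc big_ord0 => /eqP; rewrite eq_sym oner_eq0.
Qed.

Lemma real_hyperplane_embedding d (h : 'cV[C]_d) : unitv h ->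
  exists F : 'cV[C]_d -> 'cV[C]_(2 * d).-1,
    (forall u, realv (F u)) /\
    forall u u', 'Re (dotc h u) = 0 -> 'Re (dotc h u') = 0 ->
      dotc (F u) (F u') = 'Re (dotc u u').
Proof.
move=> h1; set n := (2 * d).-1.
have dd : n.+1 = (d + d)%N.
  by rewrite /n prednK ?addnn ?mul2n // double_gt0 (unitv_dim_gt0 h1).
pose a := realify h; have ra : real_seq a := realify_real h.
have aa1 : dotn n.+1 a a = 1 by rewrite dd realify_dot h1 (Creal_ReP _ (rpred1 _)).
have Fa_real u : real_seq (reflect_to_last n a (realify u)).
  exact: reflect_to_last_real ra (realify_real u).
exists (fun u => \col_(k < n) reflect_to_last n a (realify u) k); split.
  by move=> u k; rewrite mxE; apply: Fa_real.
move=> u u' hu hu'; rewrite dotc_col_real // -dotn_recr0.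
  by rewrite householder_dot dd realify_dot.
by apply: reflect_to_last_lastE; rewrite // dd realify_dot.
Qed.

Lemma Re_dotc_iZl d (u v : 'cV[C]_d) : 'Re (dotc ('i *: u) v) = 'Im (dotc u v).
Proof. by rewrite dotcZl conjCi mulNr raddfN /= ReMil opprK. Qed.

Lemma orth_rep_realize_real_overlaps (V : finType) (E : rel V) d
    (psi : 'cV[C]_d) (v : V -> 'cV[C]_d) :
  orth_rep E psi v -> (forall j, dotc psi (v j) \is Num.real) ->
  exists (phi : 'cV[C]_(2 * d).-1) (om : V -> 'cV[C]_(2 * d).-1),
    real_orth_rep E phi om /\ forall j, dotc phi (om j) = dotc psi (v j).
Proof.
move=> [psi1 v1 v_orth] overlap_real.
have ipsi1 : unitv ('i *: psi).
  by rewrite /unitv dotcZl dotcZr psi1 mulr1 conjCi mulNr mulCii opprK.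
have [F [F_real F_dot]] := real_hyperplane_embedding ipsi1.
have psi_perp : 'Re (dotc ('i *: psi) psi) = 0.
  by rewrite Re_dotc_iZl psi1 (Creal_ImP _ (rpred1 _)).
have v_perp j : 'Re (dotc ('i *: psi) (v j)) = 0.
  by rewrite Re_dotc_iZl (Creal_ImP _ (overlap_real j)).
exists (F psi), (F \o v); split; first split.
- split => [|j|i j Eij]; rewrite /unitv /= F_dot //.
  + by rewrite psi1 (Creal_ReP _ (rpred1 _)).
  + by rewrite v1 (Creal_ReP _ (rpred1 _)).
  + by rewrite v_orth // raddf0.
- exact: F_real.
- by move=> j; apply: F_real.
by move=> j; rewrite /= F_dot // (Creal_ReP _ (overlap_real j)).
Qed.

Definition phase (z : C) : C := if z == 0 then 1 else z^* / `|z|.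

Lemma phase_unimodular z : (phase z)^* * phase z = 1.
Proof.
rewrite /phase; case: ifP => [_|/negbT z_neq0]; first by rewrite rmorph1 mulr1.
have nz_neq0 : `|z| != 0 by rewrite normr_eq0.
rewrite rmorphM fmorphV /= conjCK (conj_Creal (normr_real _)) mulrACA -normCK.
by field.
Qed.

Lemma phaseM z : phase z * z = `|z|.
Proof.
rewrite /phase; case: ifP => [/eqP ->|/negbT z_neq0]; first by rewrite mul1r normr0.
have nz_neq0 : `|z| != 0 by rewrite normr_eq0.
by rewrite mulrAC -normCKC; field.
Qed.

Lemma orth_rep_rephase (V : finType) (E : rel V) d
    (psi : 'cV[C]_d) (v : V -> 'cV[C]_d) :
  orth_rep E psi v ->
  exists v' : V -> 'cV[C]_d,
    orth_rep E psi v' /\ forall j, dotc psi (v' j) = `|dotc psi (v j)|.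
Proof.
move=> [psi1 v1 v_orth].
exists (fun j => phase (dotc psi (v j)) *: v j); split; last first.
  by move=> j; rewrite dotcZr phaseM.
split=> // [j|i j Eij]; rewrite /unitv dotcZl dotcZr.
  by rewrite v1 mulr1 phase_unimodular.
by rewrite v_orth // !mulr0.
Qed.

Lemma lov_value_eq (V : finType) (w : V -> C) d d'
    (psi : 'cV[C]_d) (v : V -> 'cV[C]_d) (phi : 'cV[C]_d') (om : V -> 'cV[C]_d') :
  (forall j, `|dotc phi (om j)| = `|dotc psi (v j)|) ->
  lov_value w phi om = lov_value w psi v.
Proof. by move=> eq_overlap; apply: eq_bigr => j _; rewrite eq_overlap. Qed.

Lemma orth_rep_realize (V : finType) (E : rel V) (w : V -> C) d
    (psi : 'cV[C]_d) (v : V -> 'cV[C]_d) :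
  orth_rep E psi v ->
  exists (phi : 'cV[C]_(2 * d).-1) (om : V -> 'cV[C]_(2 * d).-1),
    real_orth_rep E phi om /\ lov_value w phi om = lov_value w psi v.
Proof.
move=> rep; have [v' [rep' overlap']] := orth_rep_rephase rep.
have [|phi [om [real_rep overlap]]] := orth_rep_realize_real_overlaps rep'.
  by move=> j; rewrite overlap' normr_real.
exists phi, om; split=> //; apply: lov_value_eq => j.
by rewrite overlap overlap' normr_id.
Qed.

Lemma achievable_r_c (V : finType) (E : rel V) (w : V -> C) t :
  achievable_r E w t -> achievable_c E w t.
Proof. by move=> [d [psi [v [[rep _ _] val]]]]; exists d, psi, v. Qed.

End RealRealization.

Theorem mainTheorem1 (C : numClosedFieldType) (V : finType) (E : rel V)
  (E_sym : symmetric E) (E_irr : irreflexive E)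
  (w : V -> C) (w_ge0 : forall j, 0 <= w j)
  (d : nat) (psi : 'cV[C]_d) (v : V -> 'cV[C]_d) :
  orth_rep E psi v ->
  is_theta_c E w (lov_value w psi v) ->
  (exists (phi : 'cV[C]_(2 * d).-1) (om : V -> 'cV[C]_(2 * d).-1),
      real_orth_rep E phi om /\ lov_value w phi om = lov_value w psi v)
  /\ is_theta E w (lov_value w psi v).
Proof.
move=> rep [_ theta_max].
have [phi [om [real_rep val]]] := orth_rep_realize w rep.
split; first by exists phi, om.
split; first by exists (2 * d).-1, phi, om.
by move=> t /achievable_r_c; apply: theta_max.
Qed.
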